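(* Let $x\in J$ with $\mathrm{supp}(x)=\mathbb N$, and let $(A_n)$ be a sequence of nonempty finite subsets of $\mathbb N$ converging pointwise (i.e. their indicator functions converge pointwise) to a set $A\subset\mathbb N$. Then $\lim_{n\to\infty}\|x\|_{A_n}=\|x\|_A$.
   Context: For a real sequence $x=(x(n))_{n\in\mathbb N}$ let $\|x\|_J=\sup\bigl(\sum_{i=1}^n|\sum_{k\in I_i}x(k)|^2\bigr)^{1/2}$ over all $n$ and all families of pairwise disjoint intervals $I_1,\dots,I_n$ of $\mathbb N$ (intervals: nonempty sets of consecutive positive integers). $J=\{x:\|x\|_J<\infty\}$; for $x\in J$ and any interval $I$ (finite or infinite) the series $\sum_{k\in I}x(k)$ converges. $\mathrm{supp}(x)=\{n:x(n)\ne0\}$. For $A\subset\mathbb N$, with $m_0=0$, the partition $\mathcal P_A$ of $\mathbb N$ into intervals is: $\{\mathbb N\}$ if $A=\emptyset$; $\{(m_{i-1},m_i]\}_{i=1}^k\cup\{(m_k,\infty)\}$ if $A=\{m_1<\dots<m_k\}$; $\{(m_{i-1},m_i]\}_{i\in\mathbb N}$ if $A=\{m_1<m_2<\cdots\}$ is infinite (intervals taken in $\mathbb N$). For $x\in J$, $\|x\|_A=\bigl(\sum_{I\in\mathcal P_A}|\sum_{k\in I}x(k)|^2\bigr)^{1/2}$. *)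

From HB Require Import structures.
From mathcomp Require Import all_boot all_order all_algebra.
From mathcomp Require Import all_classical all_reals all_analysis.
Set Implicit Arguments. Unset Strict Implicit. Unset Printing Implicit Defensive.
Import Order.TTheory GRing.Theory Num.Theory.
Import numFieldNormedType.Exports.
Local Open Scope classical_set_scope.
Local Open Scope ring_scope.

(* Convention: the paper's N = {1,2,...} is the set of positive elements of
   nat; a real sequence is x : nat -> R whose value at 0 is never used. *)

Definition posnat : set nat := [set k | (0 < k)%N].

(* ||x||_J < oo : sup over finite families of pairwise disjoint (finite)
   intervals [a_i, b_i] (1 <= a_i <= b_i) of sum_i |sum_{k in I_i} x k|^2. *)
Definition inJ (R : realType) (x : nat -> R) : Prop :=
  exists M : R, forall (n : nat) (a b : nat -> nat),
    (forall i, (i < n)%N -> (0 < a i)%N && (a i <= b i)%N) ->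
    (forall i j, (i < n)%N -> (j < n)%N -> i != j ->
       (b i < a j)%N || (b j < a i)%N) ->
    \sum_(i < n) `| \sum_(a i <= k < (b i).+1) x k | ^+ 2 <= M.

(* sum_{k in I} x(k) for an interval I of N: the limit of the partial sums
   taken in the natural order (a finite sum when I is finite, a series when
   I is an infinite interval). *)
Definition isum (R : realType) (x : nat -> R) (I : set nat) : R :=
  limn (fun N => \sum_(0 <= k < N | k \in I) x k).

(* The partition P_A of N into intervals, with m_0 = 0. *)
Definition partA (A : set nat) : set (set nat) :=
  [set I |
    (* A = {m_1 < ... < m_k} finite (k = 0 allowed), s = [:: m_1; ...; m_k] *)
    (exists s : seq nat, sorted ltn (0 :: s) /\ [set` s] = A /\
       ((exists i, (i < size s)%N /\
           I = [set k | (nth 0 (0 :: s) i < k)%N && (k <= nth 0 (0 :: s) i.+1)%N])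
        \/ I = [set k | (last 0 s < k)%N]))
    \/
    (* A = {m_1 < m_2 < ...} infinite, m 0 = m_0 = 0 *)
    (exists m : nat -> nat, m 0 = 0%N /\ (forall i, (m i < m i.+1)%N) /\
       range (fun i => m i.+1) = A /\
       exists i, I = [set k | (m i < k)%N && (k <= m i.+1)%N])].

Definition normA (R : realType) (x : nat -> R) (A : set nat) : R :=
  Num.sqrt (fine (\esum_(I in partA A) ((`| isum x I | ^+ 2)%:E))).

From HB Require Import structures.
From mathcomp Require Import all_boot all_order all_algebra.
From mathcomp Require Import all_classical all_reals all_analysis.
From mathcomp Require Import lra ring.
Set Implicit Arguments. Unset Strict Implicit. Unset Printing Implicit Defensive.
Import Order.TTheory GRing.Theory Num.Theory.
Import numFieldNormedType.Exports.
Local Open Scope classical_set_scope.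

(* Write F(A) = ||x||_A^2 and P n = x 1 + ... + x n, so that the sum of x over
   ]a, b] is P b - P a.  Since ||x||_J < oo, the sums of squared block sums over
   chains of disjoint intervals are bounded; concatenating chains then shows that
   for every d > 0 there is a K such that all chains lying beyond K contribute at
   most d^2.  Hence P converges and |P u - P v| <= B for some B.  The partitions
   P_A and P_(A ∩ [1, K]) share their blocks up to the one containing K; the
   remaining blocks of P_A form a chain beyond K, and an elementary estimate gives
   |F(A) - F(A ∩ [1, K])| <= 4 B d + 2 d^2.  Pointwise convergence of the
   indicators means A_n ∩ [1, K] = A ∩ [1, K] for large n, so F(A_n) -> F(A), and
   the norms converge by continuity of the square root. *)

(* [chain K s] holds for s = [:: (a_1, b_1); ...; (a_n, b_n)] with
   K <= a_1 < b_1 <= a_2 < b_2 <= ... <= a_n < b_n, i.e. s lists disjoint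
   intervals ]a_i, b_i] lying to the right of K, in increasing order. *)
Fixpoint chain (K : nat) (s : seq (nat * nat)) : bool :=
  if s is p :: s' then [&& K <= p.1, p.1 < p.2 & chain p.2 s'] else true.

Definition chain_end (K : nat) (s : seq (nat * nat)) : nat := last K (map snd s).

Lemma chain_cat K s t : chain K (s ++ t) = chain K s && chain (chain_end K s) t.
Proof. by elim: s K => [|[a b] s IH] K //=; rewrite IH !andbA. Qed.

Lemma chain_nth K s : chain K s ->
  (forall i, i < size s ->
     K <= (nth (0, 0) s i).1 /\ (nth (0, 0) s i).1 < (nth (0, 0) s i).2) /\
  (forall i j, i < j -> j < size s -> (nth (0, 0) s i).2 <= (nth (0, 0) s j).1).
Proof.
elim: s K => [|[a b] s IH] K /=; first by split => [i|i j] //; rewrite ltn0.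
move=> /and3P[Ka ab cs]; have [IH1 IH2] := IH _ cs; split.
  case=> [|i] //= /IH1[bi ->]; split => //.
  by apply: leq_trans Ka (leq_trans (ltnW ab) bi).
by case=> [|i] [|j] //= ij js; [case: (IH1 j js) | exact: IH2].
Qed.

Lemma chain_map_iota (p : nat -> nat) a n K : K <= p a ->
  (forall i, a <= i -> i < a + n -> p i < p i.+1) ->
  chain K [seq (p i, p i.+1) | i <- iota a n].
Proof.
elim: n a K => [|n IH] a K //= Ka hp; rewrite Ka hp ?leqnn ?addnS ?ltnS ?leq_addr //=.
by apply: IH => // i ai ia; apply: hp (ltnW ai) _; rewrite addnS -addSn.
Qed.

Lemma chain_end_map_iota (p : nat -> nat) a n :
  chain_end (p a) [seq (p i, p i.+1) | i <- iota a n] = p (a + n).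
Proof.
elim: n a => [|n IH] a; first by rewrite addn0.
by rewrite /chain_end /= -/(chain_end _ _) IH addSnnS.
Qed.

Definition itv_oc (lo hi : nat) : set nat := [set k | (lo < k) && (k <= hi)].
Definition itv_gt (lo : nat) : set nat := [set k | lo < k].

Lemma incr_ge_id (m : nat -> nat) : (forall i, m i < m i.+1) -> forall i, i <= m i.
Proof. by move=> hm; elim=> [|i IH] //; exact: leq_ltn_trans IH (hm i). Qed.

Lemma incr_leq_in (p : nat -> nat) n : (forall i, i < n -> p i < p i.+1) ->
  forall i j, i <= j -> j <= n -> p i <= p j.
Proof.
move=> hp i; elim=> [|j IH]; first by rewrite leqn0 => /eqP ->.
rewrite leq_eqVlt ltnS => /orP[/eqP -> //|ij jn].
exact: leq_trans (IH ij (ltnW jn)) (ltnW (hp j jn)).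
Qed.

Lemma path_map_iota (p : nat -> nat) a n :
  (forall i, a <= i -> i < a + n -> p i < p i.+1) ->
  path ltn (p a) (map p (iota a.+1 n)).
Proof.
elim: n a => [|n IH] a hp //=; rewrite hp ?leqnn ?addnS ?ltnS ?leq_addr //=.
by apply: IH => i ai ia; apply: hp (ltnW ai) _; rewrite addnS -addSn.
Qed.

Lemma incr_range_neq_seq (m : nat -> nat) (s : seq nat) :
  (forall i, m i < m i.+1) -> range (fun i => m i.+1) <> [set` s].
Proof.
move=> hm E; pose M := \max_(y <- s) y.
have : [set` s] (m M.+1) by rewrite -E; exists M.
move=> /= /(@leq_bigmax_seq _ s predT id) /(_ isT).
by apply/negP; rewrite -ltnNge (leq_trans _ (incr_ge_id hm M.+1)).
Qed.

Definition fin_range (p : nat -> nat) (n : nat) : set nat := [set` map p (iota 1 n)].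

Definition block (p : nat -> nat) (n i : nat) : set nat :=
  if i < n then itv_oc (p i) (p i.+1) else itv_gt (p i).

Lemma partA_fin_range (p : nat -> nat) n : p 0 = 0 ->
  (forall i, i < n -> p i < p i.+1) ->
  partA (fin_range p n) = block p n @` [set i | i <= n].
Proof.
move=> p0 hp; rewrite /fin_range; set s := map p (iota 1 n).
have size_s : size s = n by rewrite size_map size_iota.
(* [partA] is written with the ring zero of [nat]; matching it syntactically
   avoids a costly unification with [0%N] when rewriting. *)
have nth_s i : i <= n -> nth 0%R (0%R :: s) i = p i.
  by case: i => [|i] //= i_n; rewrite ?p0 //; rewrite (nth_map 0) ?size_iota // nth_iota.
have sorted_s : sorted ltn (0 :: s) by rewrite /= -{1}p0; apply: path_map_iota => i _; exact: hp.
apply/seteqP; split => I.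
  case=> [[t [sorted_t [st It]]]|[m [_ [hm [E _]]]]]; last by case: (incr_range_neq_seq hm E).
  have t_s : t = s.
    apply: (irr_sorted_eq ltn_trans ltnn (path_sorted sorted_t) (path_sorted sorted_s)).
    move=> y; have /= t_s := congr1 (fun B => B y) st.
    by apply/idP/idP => ?; [rewrite -t_s | rewrite t_s].
  rewrite {}t_s in It; case: It => [[i [i_n ->]]|->].
    rewrite size_s in i_n; exists i; first exact: ltnW.
    by rewrite /block i_n !nth_s // ltnW.
  by exists n; [rewrite /= leqnn | rewrite /block ltnn (last_nth 0%R) size_s nth_s].
case=> i /= i_n <-; left; exists s; split => //; split => //.
rewrite /block; case: ifPn => [i_lt|]; first by left; exists i; rewrite size_s ?nth_s // ltnW.
rewrite -leqNgt => n_i; have -> : i = n by apply/eqP; rewrite eqn_leq i_n.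
by right; rewrite (last_nth 0%R) size_s nth_s.
Qed.

Lemma block_inj (p : nat -> nat) n : (forall i, i < n -> p i < p i.+1) ->
  set_inj [set i | i <= n] (block p n).
Proof.
move=> hp; have block_gt j k : block p n j k -> p j < k.
  by rewrite /block; case: ifP => _ // /andP[].
suff lt_neq i j : i < j -> j <= n -> block p n i <> block p n j.
  move=> i j; rewrite !in_setE /= => i_n j_n E.
  by case: (ltngtP i j) => // ij; [case: (lt_neq _ _ ij j_n) | case: (lt_neq _ _ ij i_n)].
move=> ij j_n E; have i_n : i < n := leq_trans ij j_n.
have : block p n i (p i.+1) by rewrite /block i_n /itv_oc /= hp ?leqnn.
by rewrite E => /block_gt; rewrite ltnNge (incr_leq_in hp ij j_n).
Qed.

Lemma incr_range_inj (m m' : nat -> nat) : m 0 = m' 0 ->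
  (forall i, m i < m i.+1) -> (forall i, m' i < m' i.+1) ->
  range (fun i => m i.+1) = range (fun i => m' i.+1) -> m =1 m'.
Proof.
have step (f g : nat -> nat) : (forall i, f i < f i.+1) -> (forall i, g i < g i.+1) ->
    range (fun i => f i.+1) = range (fun i => g i.+1) ->
    forall i, f i = g i -> f i.+1 <= g i.+1.
  move=> hf hg fg i fg_i; have : range (fun i => f i.+1) (g i.+1) by rewrite fg; exists i.
  case=> j _ fj; rewrite -fj.
  have f_le := homo_leq leqnn leq_trans (fun k => ltnW (hf k)).
  apply: (f_le); rewrite ltnS leqNgt; apply/negP => /f_le.
  by rewrite fj fg_i leqNgt hg.
move=> m0 hm hm' E; elim=> [//|i IH].
by apply/eqP; rewrite eqn_leq (step m m') ?(step m' m).
Qed.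

Lemma partA_range (m : nat -> nat) : m 0 = 0 -> (forall i, m i < m i.+1) ->
  partA (range (fun i => m i.+1)) = (fun i => itv_oc (m i) (m i.+1)) @` setT.
Proof.
move=> m0 hm; apply/seteqP; split => I.
  case=> [[s [_ [E _]]]|[m' [m0' [hm' [E [i ->]]]]]].
    by case: (incr_range_neq_seq hm (esym E)).
  have mm' := incr_range_inj (etrans m0' (esym m0)) hm' hm E.
  by exists i => //; rewrite !mm'.
by case=> i _ <-; right; exists m; do 3 split => //; exists i.
Qed.

Lemma finite_set_enum (A : set nat) : finite_set A -> A `<=` posnat ->
  exists p n, [/\ p 0 = 0, forall i, i < n -> p i < p i.+1 & A = fin_range p n].
Proof.
move=> /finite_seqP[s0 ->] Apos; set s := sort leq (undup s0).
have mem_s y : (y \in s) = (y \in s0) by rewrite mem_sort mem_undup.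
have sorted_s : sorted ltn (0 :: s).
  rewrite /= path_min_sorted; last by apply/allP => y; rewrite mem_s => /Apos.
  by rewrite ltn_sorted_uniq_leq sort_uniq undup_uniq sort_sorted //; exact: leq_total.
exists (nth 0 (0 :: s)), (size s); split => // [i i_s|].
  by apply: (sorted_ltn_nth ltn_trans 0 sorted_s); rewrite //= inE /= ltnS ltnW.
have -> : fin_range (nth 0 (0 :: s)) (size s) = [set` s].
  by rewrite /fin_range -(addn0 1) iotaDl -map_comp -[s in RHS](mkseq_nth 0 s).
by apply/seteqP; split => y /=; rewrite mem_s.
Qed.

Lemma infinite_set_enum (A : set nat) : ~ finite_set A -> A `<=` posnat ->
  exists m : nat -> nat,
    [/\ m 0 = 0, forall i, m i < m i.+1 & range (fun i => m i.+1) = A].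
Proof.
move=> infA Apos.
have next k : exists y, [/\ A y, k < y & forall z, A z -> k < z -> y <= z].
  have ex_y : exists y, (y \in A) && (k < y).
    apply: contrapT => /forallNP noy; apply: infA.
    apply: (@sub_finite_set _ _ [set` iota 0 k.+1]); last by apply/finite_seqP; exists (iota 0 k.+1).
    move=> y Ay; change (y \in iota 0 k.+1); rewrite mem_iota leq0n add0n ltnS leqNgt; apply/negP => ky.
    by apply: (noy y); rewrite ky andbT in_setE.
  case: (ex_minnP ex_y) => z /andP[Az kz] min_z.
  by exists z; split => [|//|t At kt]; [rewrite -in_setE | apply: min_z; rewrite kt andbT in_setE].
have [nxt Hn] := choice next; pose m i := iter i nxt 0.
have hm i : m i < m i.+1 by rewrite /m iterS; case: (Hn (m i)).
exists m; split => //; apply/seteqP; split => [y [i _ <-]|y Ay].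
  by rewrite /m iterS; case: (Hn (m i)).
have [i mi_y max_i] : exists2 i, m i < y & forall j, m j < y -> j <= i.
  have ub j : m j < y -> j <= y by move=> /(leq_ltn_trans (incr_ge_id hm j))/ltnW.
  have ex_i : exists i, m i < y by exists 0; exact: Apos.
  by case: (ex_maxnP ex_i ub) => i; exists i.
exists i => //; apply/eqP; rewrite eqn_leq; case: (Hn (m i)) => _ _ -> //.
by rewrite leqNgt; apply/negP => /max_i; rewrite ltnn.
Qed.

Lemma fin_range_trunc (p : nat -> nat) n K : p 0 = 0 ->
  (forall i, i < n -> p i < p i.+1) ->
  exists r, [/\ r <= n, p r <= K, (r < n -> K < p r.+1) &
    fin_range p n `&` [set k | k <= K] = fin_range p r].
Proof.
move=> p0 hp; have ex_r : exists i, (i <= n) && (p i <= K) by exists 0; rewrite p0.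
have ub i : (i <= n) && (p i <= K) -> i <= n by move=> /andP[].
case: (ex_maxnP ex_r ub) => r /andP[r_n prK] max_r.
have incr_p := incr_leq_in hp.
exists r; split => // [r_lt|].
  by rewrite ltnNge; apply/negP => prK'; have := max_r r.+1; rewrite r_lt prK' ltnn => /(_ isT).
apply/seteqP; split => y /=.
  case; rewrite /fin_range /in_mem /= => /mapP [i]; rewrite mem_iota => /andP[i1 i2] -> piK.
  apply/mapP; exists i => //; rewrite mem_iota i1 /= add1n ltnS max_r //.
  by rewrite piK andbT -ltnS -(add1n n).
rewrite /fin_range => /mapP [i]; rewrite mem_iota add1n ltnS => /andP[i1 i_r] ->; split.
  by apply/mapP; exists i => //; rewrite mem_iota i1 add1n ltnS (leq_trans i_r).
exact: leq_trans (incr_p _ _ i_r r_n) prK.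
Qed.

Lemma range_trunc (m : nat -> nat) K : (forall i, m i < m i.+1) ->
  range (fun i => m i.+1) `&` [set k | k <= K] = fin_range m K.+1 `&` [set k | k <= K].
Proof.
move=> hm; apply/seteqP; split => y [y_in y_K]; split => //.
  case: y_in => i _ mi_y; rewrite -mi_y in y_K *; apply: map_f.
  have i_K : i < K := leq_trans (incr_ge_id hm i.+1) y_K.
  by rewrite mem_iota add1n !ltnS (ltnW i_K).
move: y_in => /mapP[i]; rewrite mem_iota => /andP[i1 _] ->.
by exists i.-1; rewrite ?prednK.
Qed.

Local Open Scope ring_scope.
Lemma ler_norm_sqr (R : realDomainType) (y d : R) :
  0 <= d -> y ^+ 2 <= d ^+ 2 -> `|y| <= d.
Proof. by move=> d0 le_yd; rewrite -(ler_pXn2r (n := 2)) // ?real_normK ?num_real. Qed.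

Section PartialSums.
Variables (R : realType) (x : nat -> R).

(* [x 0] is irrelevant: it cancels in every difference [psum b - psum a]. *)
Definition psum (n : nat) : R := \sum_(0 <= k < n.+1) x k.

Definition chain_sqsum (s : seq (nat * nat)) : R :=
  \sum_(p <- s) (psum p.2 - psum p.1) ^+ 2.

Lemma big_nat_psumB a b : (a <= b)%N -> \sum_(a.+1 <= k < b.+1) x k = psum b - psum a.
Proof.
by move=> ab; rewrite /psum (big_cat_nat _ (m := 0%N) (n := a.+1) (p := b.+1)) //= addrC addrK.
Qed.

Lemma chain_sqsum_cat s t : chain_sqsum (s ++ t) = chain_sqsum s + chain_sqsum t.
Proof. exact: big_cat. Qed.

Lemma chain_sqsum1 a b : chain_sqsum [:: (a, b)] = (psum b - psum a) ^+ 2.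
Proof. exact: big_seq1. Qed.

Lemma psum_dist_le K e : 0 <= e -> (forall s, chain K s -> chain_sqsum s <= e ^+ 2) ->
  forall u v, (K <= u)%N -> (K <= v)%N -> `|psum u - psum v| <= e.
Proof.
move=> e0 HK; suff lt_le u v : (K <= u < v)%N -> `|psum v - psum u| <= e.
  move=> u v Ku Kv; case: (ltngtP u v) => [uv|vu|->]; last by rewrite subrr normr0.
  - by rewrite distrC lt_le // Ku.
  - by rewrite lt_le // Kv.
move=> /andP[Ku uv]; apply: ler_norm_sqr => //.
by rewrite -chain_sqsum1 HK //= Ku uv.
Qed.

Hypothesis xJ : inJ x.

Lemma chain_sqsum_bounded : exists M, forall s, chain 0%N s -> chain_sqsum s <= M.
Proof.
have [M HM] := xJ; exists M => s /chain_nth[s_lt s_le].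
pose a i := (nth (0, 0)%N s i).1.+1; pose b i := (nth (0, 0)%N s i).2.
have -> : chain_sqsum s = \sum_(i < size s) `|\sum_(a i <= k < (b i).+1) x k| ^+ 2.
  rewrite /chain_sqsum (big_nth (0, 0)%N) big_mkord; apply: eq_bigr => i _.
  have [_ /ltnW ab] := s_lt i (ltn_ord i).
  by rewrite big_nat_psumB // real_normK // num_real.
apply: HM => [i /s_lt[_ ->] //|i j si sj].
by rewrite neq_ltn => /orP[] ij; rewrite !ltnS (s_le _ _ ij) ?orbT.
Qed.

Lemma chain_sqsum_tail_small e : 0 < e ->
  exists K, forall s, chain K s -> chain_sqsum s <= e.
Proof.
move=> e0; have [M HM] := chain_sqsum_bounded; apply: contrapT => /forallNP far.
have far_chain K : exists s, chain K s /\ e < chain_sqsum s.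
  have /existsNP[s /not_implyP[cs /negP]] := far K.
  by rewrite -ltNge; exists s.
have long_chain n : exists s, chain 0%N s /\ n%:R * e <= chain_sqsum s.
  elim: n => [|n [s [cs Qs]]]; first by exists [::]; rewrite mul0r /chain_sqsum big_nil.
  have [t [ct Qt]] := far_chain (chain_end 0%N s).
  exists (s ++ t); rewrite chain_cat cs ct chain_sqsum_cat mulrSr mulrDl mul1r.
  by split => //; apply: lerD => //; exact: ltW.
have [s [cs Qs]] := long_chain (Num.truncn (M / e)).+1.
have := truncnS_gt (M / e); rewrite ltr_pdivrMr // => /lt_le_trans/(_ Qs).
by rewrite ltNge HM.
Qed.

Lemma psum_cvg : cvgn psum.
Proof.
apply/cauchy_cvgP/cauchy_exP => e e0.
have e2 : 0 < (e / 2) ^+ 2 by rewrite exprn_gt0 // divr_gt0.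
have [K HK] := chain_sqsum_tail_small e2.
exists (psum K), K => // n /= Kn; rewrite -ball_normE /=.
apply: le_lt_trans (psum_dist_le _ HK _ _) _ => //; first by rewrite divr_ge0 ?ltW.
by rewrite ltr_pdivrMr // ltr_pMr // ltr1n.
Qed.

Lemma psum_bounded : exists B, forall u v, `|psum u - psum v| <= B.
Proof.
have [M HM] := chain_sqsum_bounded.
have M0 : 0 <= M by have := HM [::] isT; rewrite /chain_sqsum big_nil.
exists (Num.sqrt M) => u v; apply: (psum_dist_le (K := 0%N) (sqrtr_ge0 M)) => //.
by move=> s /HM; rewrite sqr_sqrtr.
Qed.

Definition psum_lim : R := limn psum.

Lemma isum_itv_oc lo hi : (lo <= hi)%N -> isum x (itv_oc lo hi) = psum hi - psum lo.
Proof.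
move=> lh; apply: lim_near_cst => //; exists hi.+1 => // N /= hN.
rewrite -big_nat_psumB // (big_nat_widen _ _ _ _ _ hN).
rewrite (big_nat_widenl _ _ _ _ _ (leq0n lo.+1)); apply: eq_bigl => k.
by apply/idP/idP; rewrite in_setE /itv_oc /= ltnS => /andP[-> ->].
Qed.

Lemma isum_itv_gt lo : isum x (itv_gt lo) = psum_lim - psum lo.
Proof.
apply: cvg_lim => //; rewrite -cvg_shiftS /=.
apply: (@cvg_trans _ ((fun n => psum n - psum lo) @ \oo)); last first.
  by apply: cvgB; [exact: psum_cvg | exact: cvg_cst].
apply: near_eq_cvg; exists lo => // n /= ln.
rewrite -big_nat_psumB // (big_nat_widenl _ _ _ _ _ (leq0n lo.+1)).
by apply: eq_bigl => k; apply/idP/idP; rewrite in_setE.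
Qed.

Lemma chain_sqsum_lim_le e K : (forall s, chain K s -> chain_sqsum s <= e) ->
  forall s, chain K s -> chain_sqsum s + (psum_lim - psum (chain_end K s)) ^+ 2 <= e.
Proof.
move=> HK s cs; set L := chain_end K s.
have cv : (fun n => chain_sqsum s + (psum n - psum L) ^+ 2) @ \oo -->
    chain_sqsum s + (psum_lim - psum L) ^+ 2.
  apply: cvgD; first exact: cvg_cst.
  by rewrite expr2; apply: cvgM; (apply: cvgB; [exact: psum_cvg | exact: cvg_cst]).
rewrite -(cvg_lim _ cv) //; apply: limr_le; first by apply/cvg_ex; eexists; exact: cv.
exists L.+1 => // n /= Ln; rewrite -chain_sqsum1 -chain_sqsum_cat HK //.
by rewrite chain_cat cs /= leqnn Ln.
Qed.

End PartialSums.

Definition sqnormA (R : realType) (x : nat -> R) (A : set nat) : R :=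
  fine (\esum_(I in partA A) ((`| isum x I | ^+ 2)%:E)).

Lemma eseries_cond_leq (R : realType) (f : nat -> \bar R) n :
  (\sum_(0 <= i <oo | (i <= n)%N) f i = \sum_(0 <= i < n.+1) f i)%E.
Proof.
by apply: lim_near_cst => //; exists n.+1 => // N /= hN; rewrite (big_nat_widen _ _ _ _ _ hN).
Qed.

Section SquaredNorm.
Variables (R : realType) (x : nat -> R).
Hypothesis xJ : inJ x.

Lemma sqnormA_fin_range (p : nat -> nat) n : (p 0 = 0)%N ->
  (forall i, i < n -> p i < p i.+1)%N ->
  sqnormA x (fin_range p n) = \sum_(0 <= i < n) (psum x (p i.+1) - psum x (p i)) ^+ 2
                              + (psum_lim x - psum x (p n)) ^+ 2.
Proof.
move=> p0 hp; rewrite /sqnormA partA_fin_range //.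
rewrite (esum_pred_image _ _ (fun i => i <= n)%N); last 2 first.
- by move=> i _; rewrite lee_fin sqr_ge0.
- exact: block_inj.
rewrite eseries_cond_leq big_nat_recr //= {2}/block ltnn isum_itv_gt //.
rewrite (eq_big_nat _ _ (F2 := fun i => ((psum x (p i.+1) - psum x (p i)) ^+ 2)%:E)).
  by rewrite sumEFin -EFinD real_normK ?num_real.
move=> i /andP[_ i_n]; rewrite /block i_n isum_itv_oc ?real_normK ?num_real //.
exact: ltnW (hp _ i_n).
Qed.

Lemma sqnormA_range (m : nat -> nat) : (m 0 = 0)%N -> (forall i, m i < m i.+1)%N ->
  sqnormA x (range (fun i => m i.+1)) =
  fine (\sum_(0 <= i <oo) ((psum x (m i.+1) - psum x (m i)) ^+ 2)%:E)%E.
Proof.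
move=> m0 hm; rewrite /sqnormA partA_range // esum_image; last first.
  move=> i j _ _ E; have [iN jN] : (i < (maxn i j).+1)%N /\ (j < (maxn i j).+1)%N.
    by rewrite !ltnS leq_maxl leq_maxr.
  apply: (@block_inj m (maxn i j).+1 (fun k _ => hm k)); rewrite ?in_setE /=.
  - exact: ltnW.
  - exact: ltnW.
  - by rewrite /block iN jN.
rewrite -nneseries_esumT; last by move=> i; rewrite lee_fin sqr_ge0.
congr fine; apply: eq_eseriesr => i _.
by rewrite isum_itv_oc ?real_normK ?num_real // ltnW.
Qed.

End SquaredNorm.

Lemma norm_sqr_shift_le (R : realFieldType) (a b c Y B d D : R) :
  D = (a + b) ^+ 2 + Y - (a + c) ^+ 2 -> 0 <= Y -> 0 <= d ->
  b ^+ 2 + Y <= d ^+ 2 -> c ^+ 2 <= d ^+ 2 -> `|a| <= B ->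
  `|D| <= 4 * B * d + 2 * d ^+ 2.
Proof.
move=> -> Y0 d0 hb hc ha.
have hb' : `|b| <= d by apply: ler_norm_sqr => //; lra.
have hc' : `|c| <= d by exact: ler_norm_sqr.
move: ha hb' hc'; rewrite !ler_norml => /andP[a1 a2] /andP[b1 b2] /andP[c1 c2].
by apply/andP; split; nra.
Qed.

Section Truncation.
Variables (R : realType) (x : nat -> R) (B d : R) (K : nat).
Hypotheses (xJ : inJ x) (d0 : 0 <= d)
  (tail_le : forall s, chain K s -> chain_sqsum x s <= d ^+ 2)
  (psum_dist : forall u v, `|psum x u - psum x v| <= B).

Lemma psum_lim_dist_le : (psum_lim x - psum x K) ^+ 2 <= d ^+ 2.
Proof.
have := chain_sqsum_lim_le xJ tail_le (s := [::]) isT.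
by rewrite /chain_sqsum big_nil add0r.
Qed.

Lemma tail_blocks_le (p : nat -> nat) r N : (K < p r.+1)%N -> (r < N)%N ->
  (forall i, r < i -> i < N -> p i < p i.+1)%N ->
  (psum x (p r.+1) - psum x K) ^+ 2
  + \sum_(r.+1 <= i < N) (psum x (p i.+1) - psum x (p i)) ^+ 2
  + (psum_lim x - psum x (p N)) ^+ 2 <= d ^+ 2.
Proof.
move=> Kr rN hp; set t := [seq (p i, p i.+1) | i <- iota r.+1 (N - r.+1)].
have ct : chain (p r.+1) t.
  by apply: chain_map_iota => // i ri; rewrite subnKC //; exact: hp.
have := chain_sqsum_lim_le xJ tail_le (s := (K, p r.+1) :: t).
rewrite /= leqnn Kr ct /chain_end /= -/(chain_end _ t) chain_end_map_iota subnKC //.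
by rewrite /chain_sqsum big_cons big_map -addrA; apply.
Qed.

Lemma sqnormA_fin_range_trunc (p : nat -> nat) n : (p 0 = 0)%N ->
  (forall i, i < n -> p i < p i.+1)%N ->
  `|sqnormA x (fin_range p n) - sqnormA x (fin_range p n `&` [set k | (k <= K)%N])|
    <= 4 * B * d + 2 * d ^+ 2.
Proof.
move=> p0 hp; have [r [r_n prK Kr ->]] := fin_range_trunc K p0 hp.
have B0 : 0 <= B := le_trans (normr_ge0 _) (psum_dist 0 0).
case: (ltnP r n) => [r_lt | n_r]; last first.
  have -> : r = n by apply/eqP; rewrite eqn_leq r_n.
  by rewrite subrr normr0; have := mulr_ge0 B0 d0; have := sqr_ge0 d; lra.
rewrite !sqnormA_fin_range // => [|i ir]; last exact: hp (leq_trans ir r_n).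
rewrite (big_cat_nat _ (n := r.+1)) //= big_nat_recr //=.
have tail_r := tail_blocks_le (Kr r_lt) r_lt (fun i _ => hp i).
apply: (norm_sqr_shift_le (a := psum x K - psum x (p r))
  (b := psum x (p r.+1) - psum x K) (c := psum_lim x - psum x K)
  (Y := \sum_(r.+1 <= i < n) (psum x (p i.+1) - psum x (p i)) ^+ 2
        + (psum_lim x - psum x (p n)) ^+ 2)) => //.
- by ring.
- by apply: addr_ge0; [apply: sumr_ge0 => i _|]; exact: sqr_ge0.
- by rewrite addrA.
- exact: psum_lim_dist_le.
Qed.

Lemma sqnormA_range_trunc (m : nat -> nat) : (m 0 = 0)%N -> (forall i, m i < m i.+1)%N ->
  `|sqnormA x (range (fun i => m i.+1))
    - sqnormA x (range (fun i => m i.+1) `&` [set k | (k <= K)%N])| <= 4 * B * d + 2 * d ^+ 2.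
Proof.
move=> m0 hm; rewrite range_trunc //.
have [r [_ mrK Kr ->]] := @fin_range_trunc m K.+1 K m0 (fun i _ => hm i).
have r_lt : (r < K.+1)%N by rewrite ltnS (leq_trans (incr_ge_id hm r)).
rewrite sqnormA_range // sqnormA_fin_range //.
rewrite (nneseries_split 0 r.+1); last by move=> k _; rewrite lee_fin sqr_ge0.
rewrite add0n; set Y := (\sum_(r.+1 <= k <oo) _)%E.
have Y0 : (0 <= Y)%E by apply: nneseries_ge0 => k _ _; rewrite lee_fin sqr_ge0.
have Y_le : (Y <= (d ^+ 2 - (psum x (m r.+1) - psum x K) ^+ 2)%:E)%E.
  apply: lime_le; first by apply: is_cvg_ereal_nneg_natsum => k _; rewrite lee_fin sqr_ge0.
  exists r.+1 => // N /= rN; rewrite sumEFin lee_fin.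
  have := tail_blocks_le (Kr r_lt) rN (fun i _ _ => hm i).
  have := sqr_ge0 (psum_lim x - psum x (m N)); lra.
have Yf : Y \is a fin_num by rewrite ge0_fin_numE // (le_lt_trans Y_le) // ltry.
rewrite -(fineK Yf) sumEFin -EFinD /= big_nat_recr //=.
rewrite -(fineK Yf) lee_fin in Y_le.
apply: (norm_sqr_shift_le (a := psum x K - psum x (m r))
  (b := psum x (m r.+1) - psum x K) (c := psum_lim x - psum x K) (Y := fine Y)) => //.
- by ring.
- exact: fine_ge0.
- lra.
- exact: psum_lim_dist_le.
Qed.

Lemma sqnormA_trunc (A : set nat) : A `<=` posnat ->
  `|sqnormA x A - sqnormA x (A `&` [set k | (k <= K)%N])| <= 4 * B * d + 2 * d ^+ 2.
Proof.
move=> Apos; have [finA | infA] := pselect (finite_set A).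
  by have [p [n [p0 hp ->]]] := finite_set_enum finA Apos; exact: sqnormA_fin_range_trunc.
by have [m [m0 hm <-]] := infinite_set_enum infA Apos; exact: sqnormA_range_trunc.
Qed.

End Truncation.

Lemma indicator_cvg_trunc (R : realType) (A_ : nat -> set nat) (A : set nat) :
  (forall k, (fun n => \1_(A_ n) k : R) @ \oo --> (\1_A k : R)) ->
  forall K, \forall n \near \oo, A_ n `&` [set k | (k <= K)%N] = A `&` [set k | (k <= K)%N].
Proof.
move=> A_cvg K.
have near_mem (k : 'I_K.+1) : \forall n \near \oo, (val k \in A_ n) = (val k \in A).
  have /cvgrPdist_lt/(_ 1 ltr01) := A_cvg (val k).
  apply: filterS => n; rewrite !indicE.
  by case: (_ \in A_ n); case: (_ \in A); rewrite //= ?subr0 ?sub0r ?normrN normr1 ltxx.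
apply: filterS (filter_forall _ near_mem) => n mem_n.
apply/seteqP; split => k [k_in k_K]; split => //.
all: have /= e := mem_n (Ordinal (k_K : k < K.+1)%N); apply: set_mem.
  by rewrite -e; exact: mem_set.
by rewrite e; exact: mem_set.
Qed.

Lemma sqnormA_cvg (R : realType) (x : nat -> R) (A_ : nat -> set nat) (A : set nat) :
  inJ x -> (forall n, A_ n `<=` posnat) -> A `<=` posnat ->
  (forall k, (fun n => \1_(A_ n) k : R) @ \oo --> (\1_A k : R)) ->
  (fun n => sqnormA x (A_ n)) @ \oo --> sqnormA x A.
Proof.
move=> xJ A_pos Apos A_cvg; have [B psum_dist] := psum_bounded xJ.
have B0 : 0 <= B := le_trans (normr_ge0 _) (psum_dist 0%N 0%N).
apply/cvgrPdist_le => eps eps0.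
pose d := Num.min 1 (eps / (8 * B + 4)).
have d0 : 0 < d by rewrite lt_min ltr01 divr_gt0 //; lra.
have d_small : 2 * (4 * B * d + 2 * d ^+ 2) <= eps.
  have : (8 * B + 4) * d <= eps by rewrite mulrC -ler_pdivlMr ?ge_min ?lexx ?orbT //; lra.
  have : d <= 1 by rewrite ge_min lexx.
  nra.
have [K tail_le] := chain_sqsum_tail_small xJ (exprn_gt0 2 d0).
have trunc_le := sqnormA_trunc xJ (ltW d0) tail_le psum_dist.
apply: filterS (indicator_cvg_trunc A_cvg K) => n A_n_K.
have := trunc_le _ (A_pos n); rewrite A_n_K.
have := trunc_le _ Apos.
set t := sqnormA x (A `&` _) => le_A le_A_n.
have := ler_normB (sqnormA x A - t) (sqnormA x (A_ n) - t).
rewrite opprB addrA subrK; lra.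
Qed.

Unset Implicit Arguments.

Theorem proposition3p2 (R : realType) (x : nat -> R)
  (A_ : nat -> set nat) (A : set nat) :
  inJ x ->
  (forall k, (0 < k)%N -> x k != 0) ->
  (forall n, A_ n `<=` posnat) ->
  (forall n, finite_set (A_ n)) ->
  (forall n, A_ n !=set0) ->
  A `<=` posnat ->
  (forall k, (fun n => \1_(A_ n) k : R) @ \oo --> (\1_A k : R)) ->
  (fun n => normA x (A_ n)) @ \oo --> normA x A.
Proof.
move=> xJ _ A_pos _ _ Apos A_cvg.
exact: cvg_comp (sqnormA_cvg xJ A_pos Apos A_cvg) (@sqrt_continuous R _).
Qed.
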